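(* (1) Let $K\ge 2$ and $M\ge K+1$. Let $F\in\mathcal F_K^{\mathrm{an}}$ be such that there are $\delta>0$ and a row $i$ with $\delta\le F_{ik}\le 1-\delta$ for all $k\in\{1,\dots,K\}$, and let $Q\in\mathcal Q_K\setminus\mathcal Q_K^{\mathrm{in}}$. Then there is $F^2\in\mathcal F_K^{\mathrm{an}}$ such that $FQ=F^2Q$ but $(F,Q)\not\sim(F^2,Q)$. (2) Let $F\in\mathcal F_K$ and $Q\in\mathcal Q_K^{\mathrm{in}}$ be such that there are $0<\delta<1/2$ and a row index $k_0$ with $Q_{k_0 i}\ge\delta$ for all $i\in\{1,\dots,N\}$. Then there are $F^2\in\mathcal F_K\setminus\mathcal F_K^{\mathrm{an}}$ and $Q^2\in\mathcal Q_K^{\mathrm{in}}$ such that $FQ=F^2Q^2$ but $(F,Q)\not\sim(F^2,Q^2)$. Moreover $F^2$ can be chosen so that $\{k:\ c\,e_k^{\top}\text{ is a row of }F^2\text{ for some }c>0\}=\{k:\ c\,e_k^{\top}\text{ is a row of }F\text{ for some }c>0\}\setminus\{k_0\}$.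
   Context: Fix positive integers $M$ and $N$. For a positive integer $K$, $\mathcal F_K$ is the set of real $M\times K$ matrices with all entries in $[0,1]$, and $\mathcal Q_K$ is the set of real $K\times N$ matrices with entries in $[0,1]$ each of whose columns sums to $1$. $e_k$ is the $k$-th standard basis vector of $\mathbb R^K$. $\mathcal F_K^{\mathrm{an}}$ is the set of $F\in\mathcal F_K$ such that for every $k\in\{1,\dots,K\}$ there is a row $s$ with $F_{sk}>0$ and $F_{s\ell}=0$ for all $\ell\ne k$. $\mathcal Q_K^{\mathrm{in}}$ is the set of $Q\in\mathcal Q_K$ whose rows are linearly independent. $(F^1,Q^1)\sim(F^2,Q^2)$ means $F^1,F^2$ have the same number $K$ of columns and there is a permutation $\pi$ of $\{1,\dots,K\}$ with $F^2_{sk}=F^1_{s\pi(k)}$ and $Q^2_{ki}=Q^1_{\pi(k)i}$ for all $s,k,i$. *)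

From HB Require Import structures.
From mathcomp Require Import all_boot all_order all_algebra all_fingroup.
From mathcomp Require Import reals.
Set Implicit Arguments. Unset Strict Implicit. Unset Printing Implicit Defensive.
Import Order.TTheory GRing.Theory Num.Theory.
Local Open Scope ring_scope.

Section Defs.
Variable R : realType.

Definition inFK (M K : nat) (F : 'M[R]_(M, K)) : Prop :=
  forall s k, 0 <= F s k <= 1.

Definition inQK (K N : nat) (Q : 'M[R]_(K, N)) : Prop :=
  (forall k i, 0 <= Q k i <= 1) /\ (forall i, \sum_(k < K) Q k i = 1).

Definition inFKan (M K : nat) (F : 'M[R]_(M, K)) : Prop :=
  inFK F /\
  forall k : 'I_K, exists s : 'I_M, 0 < F s k /\ forall l : 'I_K, l != k -> F s l = 0.

Definition inQKin (K N : nat) (Q : 'M[R]_(K, N)) : Prop :=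
  inQK Q /\ row_free Q.

(* (F1,Q1) ~ (F2,Q2) : same K (enforced by typing) and a common permutation *)
Definition equivFQ (M K N : nat) (F1 : 'M[R]_(M, K)) (Q1 : 'M[R]_(K, N))
    (F2 : 'M[R]_(M, K)) (Q2 : 'M[R]_(K, N)) : Prop :=
  exists pi : 'S_K,
    (forall s k, F2 s k = F1 s (pi k)) /\ (forall k i, Q2 k i = Q1 (pi k) i).

Definition anchored (M K : nat) (F : 'M[R]_(M, K)) (k : 'I_K) : Prop :=
  exists s : 'I_M, exists c : R, 0 < c /\ row s F = c *: delta_mx 0 k.

End Defs.

From HB Require Import structures.
From mathcomp Require Import all_boot all_order all_algebra all_fingroup.
From mathcomp Require Import reals.
From mathcomp Require Import ring lra.
Set Implicit Arguments. Unset Strict Implicit. Unset Printing Implicit Defensive.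
Import Order.TTheory GRing.Theory Num.Theory.
Local Open Scope ring_scope.

(* If the rows of Q are dependent, a small multiple of a nonzero v with v Q = 0
   can be added to a row i of F whose entries lie in [delta, 1 - delta]. Row i
   has no zero entry, so it is no anchor row; the anchor rows are unchanged and
   force every permutation relating the two factorizations to be the identity,
   which is absurd since row i did change.
   If the rows of Q are independent, let B = (1 - delta) I + delta e_k0 1^T and
   take F B, B^-1 Q. Right multiplication by B mixes every column of F with
   column k0: this destroys the anchor of k0 and only rescales the others.
   B^-1 Q stays column stochastic because Q k0 i >= delta. Since Q has
   independent rows, an equivalence would make B^-1 a permutation matrix, but
   B^-1 has negative entries. *)

Lemma exists_neq_ord (K : nat) (k : 'I_K) : (1 < K)%N -> exists j : 'I_K, j != k.
Proof.
move=> K_gt1; have : (0 < #|predC1 k|)%N by rewrite cardC1 card_ord -subn1 subn_gt0.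
by case/card_gt0P => j; exists j.
Qed.

Lemma not_row_free_ker (F : fieldType) (K N : nat) (Q : 'M[F]_(K, N)) :
  ~~ row_free Q -> exists2 v : 'rV_K, v != 0 & v *m Q = 0.
Proof.
by rewrite -kermx_eq0 => /rowV0Pn[v /sub_kermxP vQ v_neq0]; exists v.
Qed.

Lemma idempotent_mix_mulmx (R : comPzRingType) (n : nat) (P : 'M[R]_n) (a s : R) :
  P *m P = P -> a + s = 1 -> (a%:M + s *: P) *m (1%:M - s *: P) = a%:M.
Proof.
move=> PP as1; rewrite mulmxDl !mulmxBr !mulmx1 mul_scalar_mx -scalemxAr.
rewrite -scalemxAl PP !scalerA.
have -> : s * s = s - a * s by rewrite -{3}[s]mul1r -as1; ring.
by rewrite scalerBl; apply/matrixP => i j; rewrite !mxE; ring.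
Qed.

Lemma colsum_mxE (R : pzSemiRingType) (K N : nat) (Q : 'M[R]_(K, N)) i :
  ((const_mx 1 : 'rV_K) *m Q) 0 i = \sum_k Q k i.
Proof. by rewrite mxE; apply: eq_bigr => k _; rewrite mxE mul1r. Qed.

Section Identifiability.
Variable R : realType.

Definition anchor_row (M K : nat) (F : 'M[R]_(M, K)) (s : 'I_M) (k : 'I_K) :=
  0 < F s k /\ forall l, l != k -> F s l = 0.

Lemma anchoredP (M K : nat) (F : 'M[R]_(M, K)) k :
  anchored F k <-> exists s, anchor_row F s k.
Proof.
split=> [[s [c [c_gt0 /rowP Fs]]] | [s [Fsk_gt0 Fsl]]]; exists s.
  have Fs_l l : F s l = c * (l == k)%:R by have := Fs l; rewrite !mxE eqxx.
  split=> [|l /negbTE lk]; first by rewrite Fs_l eqxx mulr1.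
  by rewrite Fs_l lk mulr0.
exists (F s k); split=> //; apply/rowP => l; rewrite !mxE eqxx /=.
by have [->|/Fsl->] := eqVneq l k; rewrite ?mulr1 ?mulr0.
Qed.

Lemma positive_row_not_anchor (M K : nat) (F : 'M[R]_(M, K)) s k :
  (1 < K)%N -> (forall l, 0 < F s l) -> ~ anchor_row F s k.
Proof.
move=> K_gt1 Fs_gt0 [_ Fs0]; have [j jk] := exists_neq_ord k K_gt1.
by have := Fs_gt0 j; rewrite Fs0 ?ltxx.
Qed.

Lemma anchor_rows_fix_perm (M K : nat) (F G : 'M[R]_(M, K)) (pi : 'S_K) :
  (forall k, exists2 s, anchor_row F s k & forall l, G s l = F s l) ->
  (forall s k, G s k = F s (pi k)) -> pi = 1%g.
Proof.
move=> anchors G_pi; apply/permP => k; rewrite perm1.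
have [s [Fsk_gt0 Fs0] Gs] := anchors k.
apply/eqP/negPn/negP => /Fs0 Fspik.
by move: Fsk_gt0; rewrite -Gs G_pi Fspik ltxx.
Qed.

Lemma inQK_colsum (K N : nat) (Q : 'M[R]_(K, N)) :
  inQK Q -> (const_mx 1 : 'rV_K) *m Q = const_mx 1.
Proof. by case=> _ Qsum; apply/rowP => i; rewrite colsum_mxE Qsum mxE. Qed.

Lemma inQK_of_ge0 (K N : nat) (Q : 'M[R]_(K, N)) :
  (forall k i, 0 <= Q k i) -> (const_mx 1 : 'rV_K) *m Q = const_mx 1 -> inQK Q.
Proof.
move=> Q_ge0 /rowP Qsum; have Qsum1 i : \sum_k Q k i = 1.
  by have := Qsum i; rewrite colsum_mxE mxE.
split=> // k i; rewrite Q_ge0 -(Qsum1 i) (bigD1 k) //= lerDl.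
exact: sumr_ge0.
Qed.

Definition shift_row (M K : nat) (F : 'M[R]_(M, K)) i (w : 'rV_K) :=
  F + delta_mx i 0 *m w.

Lemma shift_rowE (M K : nat) (F : 'M[R]_(M, K)) i w s k :
  shift_row F i w s k = F s k + (s == i)%:R * w 0 k.
Proof. by rewrite !mxE big_ord1 !mxE eqxx andbT. Qed.

Lemma shift_row_mulmx (M K N : nat) (F : 'M[R]_(M, K)) (Q : 'M_(K, N)) i w :
  w *m Q = 0 -> shift_row F i w *m Q = F *m Q.
Proof. by move=> wQ; rewrite mulmxDl -mulmxA wQ mulmx0 addr0. Qed.

Lemma exists_small_scale (K : nat) (v : 'rV[R]_K) (d : R) :
  0 < d -> exists2 e : R, 0 < e & forall k, `|e * v 0 k| <= d.
Proof.
move=> d_gt0; pose S : R := 1 + \sum_k `|v 0 k|.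
have v_le k : `|v 0 k| <= S.
  by rewrite /S (bigD1 k) //= addrCA lerDl addr_ge0 // sumr_ge0.
have S_gt0 : 0 < S by rewrite ltr_pwDl // sumr_ge0.
exists (d / S) => [|k]; first exact: divr_gt0.
have eS_ge0 : 0 <= d / S by rewrite divr_ge0 ?ltW.
rewrite normrM ger0_norm //.
by have := ler_wpM2l eS_ge0 (v_le k); rewrite divfK ?lt0r_neq0.
Qed.

Lemma not_inQKin_nonidentifiable (M K N : nat) (F : 'M[R]_(M, K)) (Q : 'M[R]_(K, N))
    (d : R) (i : 'I_M) :
  (1 < K)%N -> inFKan F -> 0 < d -> (forall k, d <= F i k <= 1 - d) ->
  inQK Q -> ~ inQKin Q ->
  exists F2 : 'M[R]_(M, K), inFKan F2 /\ F *m Q = F2 *m Q /\ ~ equivFQ F Q F2 Q.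
Proof.
move=> K_gt1 [F01 Fanc] d_gt0 Fi QK notQin.
have : ~~ row_free Q by apply/negP => Qfree; apply: notQin.
case/not_row_free_ker => v v_neq0 vQ.
have [e e_gt0 ev_small] := exists_small_scale v d_gt0.
set F2 := shift_row F i (e *: v).
have F2_off s : s != i -> forall k, F2 s k = F s k.
  by move=> /negbTE si k; rewrite shift_rowE si mul0r addr0.
have anchors k : exists2 s, anchor_row F s k & forall l, F2 s l = F s l.
  have [s Fs] := Fanc k; exists s => //; apply: F2_off; apply/eqP => si.
  by apply: positive_row_not_anchor K_gt1 _ Fs => l; rewrite si; case/andP: (Fi l); lra.
exists F2; split; [split | split].
- move=> s k; have [->|/F2_off->] := eqVneq s i; last exact: F01.
  rewrite shift_rowE eqxx mul1r mxE.
  by have := ev_small k; rewrite ler_norml; case/andP: (Fi k); lra.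
- move=> k; have [s [Fsk Fs0] F2s] := anchors k.
  by exists s; split=> [|l /Fs0]; rewrite F2s.
- by rewrite shift_row_mulmx // -scalemxAl vQ scaler0.
- case=> pi [F2_pi _]; have pi1 := anchor_rows_fix_perm anchors F2_pi.
  move/eqP: v_neq0; apply; apply/rowP => k; apply/eqP.
  have := F2_pi i k; rewrite pi1 perm1 shift_rowE eqxx mul1r -[RHS]addr0.
  by move=> /addrI/eqP; rewrite !mxE mulf_eq0 gt_eqF.
Qed.

Definition ones_row_mx (K N : nat) (k0 : 'I_K) : 'M[R]_(K, N) :=
  delta_mx k0 (0 : 'I_1) *m const_mx 1.

Lemma ones_row_mxE (K N : nat) (k0 : 'I_K) k (l : 'I_N) :
  ones_row_mx N k0 k l = (k == k0)%:R.
Proof. by rewrite !mxE big_ord1 !mxE eqxx andbT mulr1. Qed.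

Lemma mulmx_ones_rowE (M K N : nat) (F : 'M[R]_(M, K)) k0 r (l : 'I_N) :
  (F *m ones_row_mx N k0) r l = F r k0.
Proof. by rewrite mulmxA -colE !mxE big_ord1 !mxE mulr1. Qed.

Lemma colsum_ones_row (K N : nat) (k0 : 'I_K) :
  (const_mx 1 : 'rV_K) *m ones_row_mx N k0 = const_mx 1.
Proof. by apply/rowP => l; rewrite mulmx_ones_rowE !mxE. Qed.

Lemma ones_row_mulmx (K N : nat) (k0 : 'I_K) (Q : 'M[R]_(K, N)) :
  (const_mx 1 : 'rV_K) *m Q = const_mx 1 -> ones_row_mx K k0 *m Q = ones_row_mx N k0.
Proof. by move=> Qsum; rewrite -mulmxA Qsum. Qed.

Definition mix_mx (K : nat) (k0 : 'I_K) (t : R) : 'M[R]_K :=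
  (1 - t)%:M + t *: ones_row_mx K k0.

Definition unmix_mx (K : nat) (k0 : 'I_K) (t : R) : 'M[R]_K :=
  (1 - t)^-1 *: (1%:M - t *: ones_row_mx K k0).

Lemma mix_unmix (K : nat) (k0 : 'I_K) t :
  t != 1 -> mix_mx k0 t *m unmix_mx k0 t = 1%:M.
Proof.
move=> t_neq1; rewrite -scalemxAr idempotent_mix_mulmx ?subrK //.
  by rewrite scale_scalar_mx mulVf // subr_eq0 eq_sym.
by rewrite ones_row_mulmx // colsum_ones_row.
Qed.

Lemma mulmx_mixE (M K : nat) (F : 'M[R]_(M, K)) k0 t r l :
  (F *m mix_mx k0 t) r l = (1 - t) * F r l + t * F r k0.
Proof.
by rewrite mulmxDr mul_mx_scalar -scalemxAr mxE [X in _ + X]mxE mulmx_ones_rowE mxE.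
Qed.

Lemma unmix_mxE (K : nat) (k0 : 'I_K) t k l :
  unmix_mx k0 t k l = (1 - t)^-1 * ((k == l)%:R - t * (k == k0)%:R).
Proof. by rewrite !mxE big_ord1 !mxE eqxx andbT mulr1. Qed.

Lemma unmix_mulmxE (K N : nat) (k0 : 'I_K) t (Q : 'M[R]_(K, N)) k i :
  (const_mx 1 : 'rV_K) *m Q = const_mx 1 ->
  (unmix_mx k0 t *m Q) k i = (1 - t)^-1 * (Q k i - t * (k == k0)%:R).
Proof.
move=> Qsum; rewrite -scalemxAl mulmxBl mul1mx -scalemxAl ones_row_mulmx //.
by rewrite 4!mxE ones_row_mxE.
Qed.

Lemma colsum_unmix (K : nat) (k0 : 'I_K) t :
  t != 1 -> (const_mx 1 : 'rV_K) *m unmix_mx k0 t = const_mx 1.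
Proof.
move=> t_neq1; rewrite -scalemxAr mulmxBr mulmx1 -scalemxAr colsum_ones_row.
apply/rowP => l; rewrite !mxE; field.
by rewrite subr_eq0 eq_sym.
Qed.

Lemma unmix_neq_perm_mx (K : nat) (k0 : 'I_K) t (pi : 'S_K) :
  (1 < K)%N -> 0 < t < 1 -> unmix_mx k0 t != perm_mx pi.
Proof.
move=> K_gt1 /andP[t_gt0 t_lt1]; have [j jk0] := exists_neq_ord k0 K_gt1.
apply/eqP => /matrixP/(_ k0 j); rewrite unmix_mxE eq_sym (negbTE jk0) eqxx.
rewrite !mxE; have : 0 < (1 - t)^-1 by rewrite invr_gt0 subr_gt0.
by case: (_ == _); rewrite /=; nra.
Qed.

Lemma mix_anchor_row (M K : nat) (F : 'M[R]_(M, K)) k0 t r k :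
  (1 < K)%N -> 0 < t < 1 -> (forall l, 0 <= F r l) ->
  anchor_row (F *m mix_mx k0 t) r k <-> anchor_row F r k /\ k != k0.
Proof.
move=> K_gt1 /andP[t_gt0 t_lt1] Fr_ge0.
have F2E := mulmx_mixE F k0 t r.
have F2k0 : (F *m mix_mx k0 t) r k0 = F r k0 by rewrite F2E; ring.
split=> [[F2rk F2r0] | [[Frk Fr0] kk0]].
  have kk0 : k != k0.
    apply/eqP => kE; subst k; have [j jk0] := exists_neq_ord k0 K_gt1.
    have := F2r0 j jk0; rewrite F2E; have := Fr_ge0 j; rewrite -F2k0; nra.
  have Frk0 : F r k0 = 0 by rewrite -F2k0 F2r0 // eq_sym.
  split=> //; split=> [|l lk]; first by move: F2rk; rewrite F2E Frk0; nra.
  by have := F2r0 l lk; rewrite F2E Frk0; have := Fr_ge0 l; nra.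
have Frk0 : F r k0 = 0 by rewrite Fr0 // eq_sym.
split=> [|l lk]; rewrite F2E Frk0 mulr0 addr0; last by rewrite Fr0 ?mulr0.
by rewrite mulr_gt0 // subr_gt0.
Qed.

Lemma mix_inFK (M K : nat) (F : 'M[R]_(M, K)) k0 t :
  inFK F -> 0 <= t <= 1 -> inFK (F *m mix_mx k0 t).
Proof.
move=> F01 /andP[t_ge0 t_le1] r l; rewrite mulmx_mixE.
by case/andP: (F01 r l); case/andP: (F01 r k0); nra.
Qed.

Lemma anchored_mix (M K : nat) (F : 'M[R]_(M, K)) k0 t k :
  (1 < K)%N -> inFK F -> 0 < t < 1 ->
  anchored (F *m mix_mx k0 t) k <-> anchored F k /\ k != k0.
Proof.
move=> K_gt1 F01 t01; have Fr_ge0 r l : 0 <= F r l by case/andP: (F01 r l).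
rewrite !anchoredP; split=> [[r /mix_anchor_row[]//] | [[r Fr] kk0]].
  by move=> Fr kk0; split=> //; exists r.
by exists r; apply/mix_anchor_row.
Qed.

Lemma unmix_inQKin (K N : nat) (Q : 'M[R]_(K, N)) k0 t :
  inQKin Q -> t < 1 -> (forall i, t <= Q k0 i) -> inQKin (unmix_mx k0 t *m Q).
Proof.
move=> [QK Qfree] t_lt1 Qk0_ge; have t_neq1 : t != 1 by rewrite lt_eqF.
have Qsum := inQK_colsum QK; split.
  apply: inQK_of_ge0; last by rewrite mulmxA colsum_unmix.
  move=> k i; rewrite unmix_mulmxE //; apply: mulr_ge0.
    by rewrite invr_ge0 subr_ge0 (ltW t_lt1).
  have [->|_] := eqVneq k k0; rewrite ?mulr1 ?mulr0 ?subr0 ?subr_ge0 //.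
  by case/andP: (QK.1 k i).
have [_ unmix_unit] := mulmx1_unit (mix_unmix k0 t_neq1).
by rewrite /row_free eqmxMfull ?row_full_unit.
Qed.

Lemma inQKin_nonidentifiable_without_anchor (M K N : nat)
    (F : 'M[R]_(M, K)) (Q : 'M[R]_(K, N)) (t : R) (k0 : 'I_K) :
  (1 < K)%N -> inFK F -> inQKin Q -> 0 < t < 1 -> (forall i, t <= Q k0 i) ->
  exists (F2 : 'M[R]_(M, K)) (Q2 : 'M[R]_(K, N)),
    inFK F2 /\ ~ inFKan F2 /\ inQKin Q2 /\
    F *m Q = F2 *m Q2 /\ ~ equivFQ F Q F2 Q2 /\
    (forall k, anchored F2 k <-> anchored F k /\ k != k0).
Proof.
move=> K_gt1 F01 Qin t01 Qk0_ge; have /andP[t_gt0 t_lt1] := t01.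
have anchors k := anchored_mix k0 k K_gt1 F01 t01.
exists (F *m mix_mx k0 t), (unmix_mx k0 t *m Q).
split; [|split; [|split; [|split; [|split]]]] => //.
- by apply: mix_inFK => //; rewrite (ltW t_gt0) (ltW t_lt1).
- by case=> _ /(_ k0) /anchoredP /anchors [_]; rewrite eqxx.
- exact: unmix_inQKin.
- by rewrite mulmxA -(mulmxA F) mix_unmix ?lt_eqF // mulmx1.
- case=> pi [_ Q2_pi]; have /eqP := unmix_neq_perm_mx k0 pi K_gt1 t01; apply.
  apply: (row_free_inj Qin.2); rewrite /= -row_permE.
  by apply/matrixP => k i; rewrite Q2_pi !mxE.
Qed.

End Identifiability.

Theorem mainTheorem4 (R : realType) (M N : nat) (hM : (0 < M)%N) (hN : (0 < N)%N) :
  (* (1) *)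
  (forall (K : nat), (2 <= K)%N -> (K.+1 <= M)%N ->
   forall (F : 'M[R]_(M, K)) (Q : 'M[R]_(K, N)),
     inFKan F ->
     (exists delta : R, 0 < delta /\
        exists i : 'I_M, forall k : 'I_K, delta <= F i k <= 1 - delta) ->
     inQK Q -> ~ inQKin Q ->
     exists F2 : 'M[R]_(M, K),
       inFKan F2 /\ F *m Q = F2 *m Q /\ ~ equivFQ F Q F2 Q)
  /\
  (* (2) *)
  (forall (K : nat), (2 <= K)%N ->
   forall (F : 'M[R]_(M, K)) (Q : 'M[R]_(K, N)),
     inFK F -> inQKin Q ->
     forall (delta : R) (k0 : 'I_K), 0 < delta -> delta < 1 / 2 ->
     (forall i : 'I_N, delta <= Q k0 i) ->
     exists (F2 : 'M[R]_(M, K)) (Q2 : 'M[R]_(K, N)),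
       inFK F2 /\ ~ inFKan F2 /\ inQKin Q2 /\
       F *m Q = F2 *m Q2 /\ ~ equivFQ F Q F2 Q2 /\
       (forall k : 'I_K, anchored F2 k <-> (anchored F k /\ k != k0))).
Proof.
split=> [K K_gt1 _ F Q Fan [d [d_gt0 [i Fi]]] | K K_gt1 F Q F01 Qin d k0 d_gt0 d_lt].
  exact: not_inQKin_nonidentifiable Fan d_gt0 Fi.
apply: inQKin_nonidentifiable_without_anchor => //.
by rewrite d_gt0 /=; lra.
Qed.
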